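(* Let $A$ be a finite dimensional Hopf algebra over a field $k$, let $n$ be a positive integer, and let $M$ be a finite dimensional $A$-module for which $M\otimes M^*\simeq M^*\otimes M$ as $A$-modules. Then $M$ is projective if and only if $M^{\otimes n}$ is projective.
   Context: $M^*=\mathrm{Hom}_k(M,k)$ is the dual $A$-module with $(a\cdot f)(m)=f(S(a)m)$, $S$ the antipode; tensor products of $A$-modules are $A$-modules via the coproduct. *)

From HB Require Import structures.
From mathcomp Require Import all_boot all_order all_algebra.
From mathcomp Require Import mxtens.
Set Implicit Arguments. Unset Strict Implicit. Unset Printing Implicit Defensive.
Import Order.TTheory GRing.Theory Num.Theory.
Local Open Scope ring_scope.

(* A finite dimensional Hopf algebra over a field k, given by its structure
   constants with respect to a basis (e_i)_{i < hdim} of A: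
     e_i * e_j      = \sum_l hmu i j l e_l
     1              = \sum_l hunit l e_l
     Delta(e_l)     = \sum_{i,j} hdelta l i j e_i (x) e_j
     eps(e_l)       = heps l
     S(e_l)         = \sum_j hS l j e_j                                    *)
Record hopf_data (k : fieldType) := HopfData {
  hdim : nat;
  hmu : 'I_hdim -> 'I_hdim -> 'I_hdim -> k;
  hunit : 'I_hdim -> k;
  hdelta : 'I_hdim -> 'I_hdim -> 'I_hdim -> k;
  heps : 'I_hdim -> k;
  hS : 'I_hdim -> 'I_hdim -> k }.
Arguments hdim {k} h.
Arguments hmu {k} h _ _ _.
Arguments hunit {k} h _.
Arguments hdelta {k} h _ _ _.
Arguments heps {k} h _.
Arguments hS {k} h _ _.

Definition is_hopf (k : fieldType) (H : hopf_data k) : Prop :=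
  let mu := hmu H in let u := hunit H in let del := hdelta H in
  let eps := heps H in let S := hS H in
  (forall i j p q, \sum_l mu i j l * mu l p q = \sum_l mu j p l * mu i l q) /\
  (forall j q, \sum_l u l * mu l j q = (j == q)%:R) /\
  (forall j q, \sum_l u l * mu j l q = (j == q)%:R) /\
  (forall l x y z, \sum_i del l i z * del i x y = \sum_j del l x j * del j y z) /\
  (forall l j, \sum_i del l i j * eps i = (l == j)%:R) /\
  (forall l i, \sum_j del l i j * eps j = (l == i)%:R) /\
  (* Delta is an algebra morphism *)
  (forall i j x y, \sum_l mu i j l * del l x y =
     \sum_a \sum_b \sum_c \sum_d del i a b * del j c d * mu a c x * mu b d y) /\
  (forall x y, \sum_l u l * del l x y = u x * u y) /\
  (forall i j, \sum_l mu i j l * eps l = eps i * eps j) /\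
  (\sum_l u l * eps l = 1) /\
  (* antipode *)
  (forall l x, \sum_a \sum_b \sum_c del l a b * S a c * mu c b x = eps l * u x) /\
  (forall l x, \sum_a \sum_b \sum_c del l a b * S b c * mu a c x = eps l * u x).

(* A finite dimensional A-module: a space k^mdim (column vectors) with the
   action of each basis element e_i given by the matrix mact i. *)
Record fdmod (k : fieldType) (H : hopf_data k) := FDMod {
  mdim : nat;
  mact : 'I_(hdim H) -> 'M[k]_mdim }.
Arguments mdim {k H} f.
Arguments mact {k H} f _.

Definition is_module (k : fieldType) (H : hopf_data k) (M : fdmod H) : Prop :=
  (forall i j, mact M i *m mact M j = \sum_l hmu H i j l *: mact M l) /\
  (\sum_l hunit H l *: mact M l = 1%:M).

Definition tens (k : fieldType) (H : hopf_data k) (M N : fdmod H) : fdmod H :=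
  @FDMod k H (mdim M * mdim N)
    (fun l => \sum_i \sum_j hdelta H l i j *: (mact M i *t mact N j)).

(* Dual module: (a.f)(m) = f(S(a) m); in the dual basis e_l acts by the
   transpose of the matrix of S(e_l). *)
Definition dual (k : fieldType) (H : hopf_data k) (M : fdmod H) : fdmod H :=
  @FDMod k H (mdim M) (fun l => (\sum_j hS H l j *: mact M j)^T).

Definition triv (k : fieldType) (H : hopf_data k) : fdmod H :=
  @FDMod k H 1 (fun l => (heps H l)%:M).

Fixpoint tpow (k : fieldType) (H : hopf_data k) (M : fdmod H) (n : nat) : fdmod H :=
  match n with
  | 0 => triv H
  | 1 => M
  | n'.+1 => tens (tpow M n') M
  end.

Definition is_hom (k : fieldType) (H : hopf_data k) (M N : fdmod H)
  (F : 'M[k]_(mdim N, mdim M)) : Prop :=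
  forall i, F *m mact M i = mact N i *m F.

Definition mod_iso (k : fieldType) (H : hopf_data k) (M N : fdmod H) : Prop :=
  exists (F : 'M[k]_(mdim N, mdim M)) (G : 'M[k]_(mdim M, mdim N)),
    [/\ is_hom F, is_hom G, F *m G = 1%:M & G *m F = 1%:M].

(* M is projective: every surjective A-module map onto M splits. *)
Definition projective (k : fieldType) (H : hopf_data k) (M : fdmod H) : Prop :=
  forall (N : fdmod H), is_module N ->
  forall (F : 'M[k]_(mdim M, mdim N)), is_hom F -> \rank F = mdim M ->
  exists G : 'M[k]_(mdim N, mdim M), is_hom G /\ F *m G = 1%:M.

(* A projective [P] is a direct summand of a free module [A (x) k^d], and for any
   module [X] the map [a (x) x |-> a_(1) (x) a_(2) x] is an isomorphism from the free
   module [A (x) k^(dim X)] onto [A (x) X]; hence [P (x) X] is projective, and so is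
   every tensor power of a projective [M].
   Conversely, evaluation and coevaluation satisfy the snake identity, which makes [M]
   a direct summand of [M (x) M^* (x) M], isomorphic by hypothesis to [M (x) M (x) M^*].
   So [M^(x n)] is a summand of [M^(x n+1) (x) M^*], projective when [M^(x n+1)] is,
   and a descending induction on [n] concludes. That [M^*] is a module at all rests on
   the antipode being an anti-homomorphism, by uniqueness of convolution inverses. *)

From mathcomp Require Import all_boot all_order all_algebra.
From mathcomp Require Import mxtens ring.
Set Implicit Arguments. Unset Strict Implicit. Unset Printing Implicit Defensive.
Import GRing.Theory.
Local Open Scope ring_scope.

Section TensorMatrix.
Variable k : fieldType.

Lemma tensmxDl m n p q (A1 A2 : 'M[k]_(m, n)) (B : 'M[k]_(p, q)) :
  (A1 + A2) *t B = A1 *t B + A2 *t B.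
Proof. by apply/matrixP=> i j; rewrite !mxE mulrDl. Qed.

Lemma tensmxDr m n p q (A : 'M[k]_(m, n)) (B1 B2 : 'M[k]_(p, q)) :
  A *t (B1 + B2) = A *t B1 + A *t B2.
Proof. by apply/matrixP=> i j; rewrite !mxE mulrDr. Qed.

Lemma tensmxZl m n p q a (A : 'M[k]_(m, n)) (B : 'M[k]_(p, q)) :
  (a *: A) *t B = a *: (A *t B).
Proof. by apply/matrixP=> i j; rewrite !mxE mulrA. Qed.

Lemma tensmxZr m n p q a (A : 'M[k]_(m, n)) (B : 'M[k]_(p, q)) :
  A *t (a *: B) = a *: (A *t B).
Proof. by apply/matrixP=> i j; rewrite !mxE mulrCA. Qed.

Lemma tensmx_suml m n p q I (r : seq I) (P : pred I) (F : I -> 'M[k]_(m, n))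
    (B : 'M[k]_(p, q)) :
  (\sum_(i <- r | P i) F i) *t B = \sum_(i <- r | P i) F i *t B.
Proof. exact: (big_morph (fun A => A *t B) (fun A1 A2 => tensmxDl A1 A2 B) (tens0mx B)). Qed.

Lemma tensmx_sumr m n p q I (r : seq I) (P : pred I) (A : 'M[k]_(m, n))
    (F : I -> 'M[k]_(p, q)) :
  A *t (\sum_(i <- r | P i) F i) = \sum_(i <- r | P i) A *t F i.
Proof. exact: (big_morph (fun B => A *t B) (tensmxDr A) (tensmx0 A)). Qed.

Lemma tensmx1 m n : (1%:M : 'M[k]_m) *t (1%:M : 'M[k]_n) = 1%:M.
Proof.
apply/matrixP=> i j.
case: (mxtens_indexP i) => i1 i2; case: (mxtens_indexP j) => j1 j2.
rewrite tensmxE !mxE -natrM mulnb; congr (_%:R); congr nat_of_bool.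
apply/andP/eqP => [[/eqP-> /eqP->] // | /(congr1 (@mxtens_unindex m n))].
by rewrite !mxtens_indexK => -[-> ->].
Qed.

Lemma cast_mxtens_indexA m1 m2 m3 (i1 : 'I_m1) (i2 : 'I_m2) (i3 : 'I_m3) :
  cast_ord (esym (mulnA m1 m2 m3)) (mxtens_index (mxtens_index (i1, i2), i3))
  = mxtens_index (i1, mxtens_index (i2, i3)).
Proof. by apply: val_inj => /=; rewrite mulnDl -mulnA addnA. Qed.

Lemma tensmxA m1 m2 m3 n1 n2 n3 (A : 'M[k]_(m1, n1)) (B : 'M[k]_(m2, n2))
    (C : 'M[k]_(m3, n3)) :
  (A *t B) *t C = castmx (mulnA m1 m2 m3, mulnA n1 n2 n3) (A *t (B *t C)).
Proof.
apply/matrixP=> i j.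
case: (mxtens_indexP i) => i12 i3; case: (mxtens_indexP i12) => i1 i2.
case: (mxtens_indexP j) => j12 j3; case: (mxtens_indexP j12) => j1 j2.
by rewrite castmxE /= !cast_mxtens_indexA !tensmxE mulrA.
Qed.

Lemma castmx_sum m n m' n' (em : m = m') (en : n = n') I (r : seq I) (P : pred I)
    (F : I -> 'M[k]_(m, n)) :
  castmx (em, en) (\sum_(i <- r | P i) F i) = \sum_(i <- r | P i) castmx (em, en) (F i).
Proof.
case: m' / em; case: n' / en.
by rewrite castmx_id; apply: eq_bigr => i _; rewrite castmx_id.
Qed.

Lemma castmxZ m n m' n' (em : m = m') (en : n = n') a (A : 'M[k]_(m, n)) :
  castmx (em, en) (a *: A) = a *: castmx (em, en) A.
Proof. by case: m' / em; case: n' / en; rewrite !castmx_id. Qed.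

Definition cast_idmx m n (e : m = n) : 'M[k]_(n, m) := castmx (e, erefl m) 1%:M.

Lemma cast_idmxK m n (e : m = n) : cast_idmx (esym e) *m cast_idmx e = 1%:M.
Proof. by case: n / e; rewrite /cast_idmx !castmx_id mulmx1. Qed.

Lemma cast_idmxKV m n (e : m = n) : cast_idmx e *m cast_idmx (esym e) = 1%:M.
Proof. by case: n / e; rewrite /cast_idmx !castmx_id mulmx1. Qed.

Lemma cast_idmx_conj m n (e : m = n) (Y : 'M[k]_m) :
  cast_idmx e *m Y = castmx (e, e) Y *m cast_idmx e.
Proof. by case: n / e; rewrite /cast_idmx !castmx_id mulmx1 mul1mx. Qed.

Lemma mulmx_cast_idmx p m n (e : m = n) (X : 'M[k]_(p, m)) :
  X *m cast_idmx (esym e) = castmx (erefl p, e) X.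
Proof. by case: n / e; rewrite /cast_idmx !castmx_id mulmx1. Qed.

Lemma sum_mxtens_index (V : nmodType) m n (F : 'I_(m * n) -> V) :
  \sum_c F c = \sum_i \sum_j F (mxtens_index (i, j)).
Proof.
rewrite (reindex (@mxtens_index m n)) /=; last first.
  by exists (@mxtens_unindex m n) => x _; rewrite (mxtens_indexK, mxtens_unindexK).
by rewrite pair_bigA; apply: eq_bigr => -[].
Qed.

End TensorMatrix.
Arguments cast_idmx {k m n} e.

Lemma sum_pair (V : nmodType) (I J : finType) (F : I * J -> V) :
  \sum_p F p = \sum_i \sum_j F (i, j).
Proof. by rewrite pair_bigA; apply: eq_bigr => -[]. Qed.

Section KroneckerSums.
Variables (k : fieldType) (I : finType).

Lemma sum_mul_delta (f : I -> k) j : \sum_i f i * (i == j)%:R = f j.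
Proof. by rewrite (bigD1 j) //= eqxx mulr1 big1 ?addr0 // => i /negbTE ->; rewrite mulr0. Qed.

Lemma sum_delta_mul (f : I -> k) i : \sum_j (i == j)%:R * f j = f i.
Proof.
rewrite (bigD1 i) //= eqxx mul1r big1 ?addr0 // => j.
by rewrite eq_sym => /negbTE ->; rewrite mul0r.
Qed.

Lemma sum_delta_scale (V : lmodType k) (F : I -> V) i :
  \sum_j (i == j)%:R *: F j = F i.
Proof.
rewrite (bigD1 i) //= eqxx scale1r big1 ?addr0 // => j.
by rewrite eq_sym => /negbTE ->; rewrite scale0r.
Qed.

End KroneckerSums.

Section ReorderSums.
Variables (k : fieldType) (V : lmodType k) (I : finType).

(* [exchange_big_mn] moves [m] outer sums past the [n] sums that follow them. *)

Lemma exchange_big_21 (G : I -> I -> I -> V) :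
  \sum_a \sum_b \sum_y G a b y = \sum_y \sum_a \sum_b G a b y.
Proof. by under eq_bigr do rewrite exchange_big; rewrite exchange_big. Qed.

Lemma exchange_big_31 (G : I -> I -> I -> I -> V) :
  \sum_a \sum_b \sum_c \sum_y G a b c y = \sum_y \sum_a \sum_b \sum_c G a b c y.
Proof. by under eq_bigr do rewrite exchange_big_21; rewrite exchange_big. Qed.

Lemma exchange_big_41 (G : I -> I -> I -> I -> I -> V) :
  \sum_a \sum_b \sum_c \sum_d \sum_y G a b c d y =
  \sum_y \sum_a \sum_b \sum_c \sum_d G a b c d y.
Proof. by under eq_bigr do rewrite exchange_big_31; rewrite exchange_big. Qed.

Lemma exchange_big_12 (G : I -> I -> I -> V) :
  \sum_a \sum_x \sum_y G a x y = \sum_x \sum_y \sum_a G a x y.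
Proof. by rewrite exchange_big; under eq_bigr do rewrite exchange_big. Qed.

Lemma exchange_big_22 (G : I -> I -> I -> I -> V) :
  \sum_a \sum_b \sum_x \sum_y G a b x y = \sum_x \sum_y \sum_a \sum_b G a b x y.
Proof. by under eq_bigr do rewrite exchange_big_12; rewrite exchange_big_12. Qed.

Lemma exchange_big_42 (G : I -> I -> I -> I -> I -> I -> V) :
  \sum_a \sum_b \sum_c \sum_d \sum_x \sum_y G a b c d x y =
  \sum_x \sum_y \sum_a \sum_b \sum_c \sum_d G a b c d x y.
Proof.
under eq_bigr do under eq_bigr do rewrite exchange_big_22.
by rewrite exchange_big_22.
Qed.

Lemma scaler_suml2 (f : I -> I -> k) (v : V) :
  (\sum_a \sum_b f a b) *: v = \sum_a \sum_b f a b *: v.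
Proof. by rewrite scaler_suml; under eq_bigr do rewrite scaler_suml. Qed.

Lemma scaler_suml3 (f : I -> I -> I -> k) (v : V) :
  (\sum_a \sum_b \sum_c f a b c) *: v = \sum_a \sum_b \sum_c f a b c *: v.
Proof. by rewrite scaler_suml; under eq_bigr do rewrite scaler_suml2. Qed.

Lemma scaler_suml4 (f : I -> I -> I -> I -> k) (v : V) :
  (\sum_a \sum_b \sum_c \sum_d f a b c d) *: v = \sum_a \sum_b \sum_c \sum_d f a b c d *: v.
Proof. by rewrite scaler_suml; under eq_bigr do rewrite scaler_suml3. Qed.

Lemma scaler_sumrZ (c : k) (f : I -> k) (T : I -> V) :
  c *: (\sum_x f x *: T x) = \sum_x (c * f x) *: T x.
Proof. by rewrite scaler_sumr; under eq_bigr do rewrite scalerA. Qed.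

Lemma scaler_sumrZ2 (c : k) (f : I -> I -> k) (T : I -> I -> V) :
  c *: (\sum_x \sum_y f x y *: T x y) = \sum_x \sum_y (c * f x y) *: T x y.
Proof. by rewrite scaler_sumr; under eq_bigr do rewrite scaler_sumrZ. Qed.

End ReorderSums.

Section MatrixSums.
Variables (k : fieldType) (I : finType).

Lemma tensmx_sumZ m n p q (al be : I -> k) (A : I -> 'M[k]_(m, n)) (B : I -> 'M[k]_(p, q)) :
  (\sum_x al x *: A x) *t (\sum_y be y *: B y) = \sum_x \sum_y (al x * be y) *: (A x *t B y).
Proof.
rewrite tensmx_suml; apply: eq_bigr => x _; rewrite tensmx_sumr; apply: eq_bigr => y _.
by rewrite tensmxZl tensmxZr scalerA.
Qed.

Lemma mulmx_sumZ m n p (al be : I -> k) (A : I -> 'M[k]_(m, n)) (B : I -> 'M[k]_(n, p)) :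
  (\sum_a al a *: A a) *m (\sum_c be c *: B c) = \sum_a \sum_c (al a * be c) *: (A a *m B c).
Proof.
rewrite mulmx_suml; apply: eq_bigr => a _.
rewrite -scalemxAl mulmx_sumr scaler_sumr; apply: eq_bigr => c _.
by rewrite -scalemxAr scalerA.
Qed.

Lemma mulmx_sum2Z m n p (al be : I -> I -> k) (A : I -> I -> 'M[k]_(m, n))
    (B : I -> I -> 'M[k]_(n, p)) :
  (\sum_a \sum_b al a b *: A a b) *m (\sum_c \sum_d be c d *: B c d) =
  \sum_a \sum_b \sum_c \sum_d (al a b * be c d) *: (A a b *m B c d).
Proof.
rewrite mulmx_suml; apply: eq_bigr => a _; rewrite mulmx_suml; apply: eq_bigr => b _.
rewrite -scalemxAl mulmx_sumr scaler_sumr; apply: eq_bigr => c _.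
rewrite mulmx_sumr scaler_sumr; apply: eq_bigr => d _.
by rewrite -scalemxAr scalerA.
Qed.

End MatrixSums.

Section Blocks.
Variables (k : fieldType) (h d : nat).

Definition blocks (B : 'I_h -> 'I_h -> 'M[k]_d) : 'M[k]_(h * d) :=
  \sum_i \sum_l delta_mx i l *t B i l.

Lemma eq_blocks B C : (forall i l, B i l = C i l) -> blocks B = blocks C.
Proof. by move=> eBC; apply: eq_bigr => i _; apply: eq_bigr => l _; rewrite eBC. Qed.

Lemma mul_blocks B C : blocks B *m blocks C = blocks (fun i l' => \sum_l B i l *m C l l').
Proof.
rewrite /blocks mulmx_suml; apply: eq_bigr => i _; rewrite mulmx_suml.
transitivity (\sum_l \sum_l' delta_mx i l' *t (B i l *m C l l')); last first.
  by rewrite exchange_big; apply: eq_bigr => l' _; rewrite tensmx_sumr.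
apply: eq_bigr => l _; rewrite mulmx_sumr.
transitivity (\sum_l' \sum_i' (l == i')%:R *: (delta_mx i l' *t (B i l *m C i' l'))).
  rewrite exchange_big; apply: eq_bigr => i' _; rewrite mulmx_sumr; apply: eq_bigr => l' _.
  by rewrite tensmx_mul mul_delta_mx_cond -scaler_nat tensmxZl.
by apply: eq_bigr => l' _; rewrite (sum_delta_scale (fun i' => delta_mx i l' *t _)).
Qed.

Lemma tensmx_blocks (A : 'M[k]_h) (B : 'M[k]_d) : A *t B = blocks (fun i l => A i l *: B).
Proof.
rewrite {1}(matrix_sum_delta A) tensmx_suml; apply: eq_bigr => i _.
by rewrite tensmx_suml; apply: eq_bigr => l _; rewrite tensmxZl tensmxZr.
Qed.

Lemma sum_blocks (I : finType) (B : I -> 'I_h -> 'I_h -> 'M[k]_d) :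
  \sum_x blocks (B x) = blocks (fun i l => \sum_x B x i l).
Proof.
rewrite /blocks exchange_big; apply: eq_bigr => i _.
by rewrite exchange_big; apply: eq_bigr => l _; rewrite tensmx_sumr.
Qed.

Lemma scale_blocks c B : c *: blocks B = blocks (fun i l => c *: B i l).
Proof.
rewrite /blocks scaler_sumr; apply: eq_bigr => i _.
by rewrite scaler_sumr; apply: eq_bigr => l _; rewrite tensmxZr.
Qed.

Lemma blocks1 : blocks (fun i l => (i == l)%:R *: 1%:M) = 1%:M.
Proof. by rewrite -tensmx1 tensmx_blocks; apply: eq_blocks => i l; rewrite mxE. Qed.

End Blocks.

Section RowBlocks.
Variable k : fieldType.

Definition row_blocks h m d (C : 'I_h -> 'M[k]_(m, d)) : 'M[k]_(m, h * d) :=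
  \matrix_(r, c) C (mxtens_unindex c).1 r (mxtens_unindex c).2.

Lemma eq_row_blocks h m d (C C' : 'I_h -> 'M[k]_(m, d)) :
  C =1 C' -> row_blocks C = row_blocks C'.
Proof. by move=> eC; apply/matrixP => r c; rewrite !mxE eC. Qed.

Lemma mul_row_blocks h m m' d (X : 'M[k]_(m', m)) (C : 'I_h -> 'M[k]_(m, d)) :
  X *m row_blocks C = row_blocks (fun i => X *m C i).
Proof. by apply/matrixP => r c; rewrite !mxE; apply: eq_bigr => x _; rewrite !mxE. Qed.

Lemma row_blocks_mul_tens h m d (C : 'I_h -> 'M[k]_(m, d)) (L : 'M[k]_h) :
  row_blocks C *m (L *t 1%:M) = row_blocks (fun i => \sum_i' L i' i *: C i').
Proof.
apply/matrixP => r c; case: (mxtens_indexP c) => i j.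
rewrite !mxE sum_mxtens_index summxE mxtens_indexK /=.
apply: eq_bigr => i' _; rewrite (bigD1 j) //= big1 ?addr0; last first.
  by move=> j' /negbTE nj; rewrite tensmxE [1%:M j' j]mxE nj mulr0 mulr0.
by rewrite tensmxE !mxE mxtens_indexK eqxx mulr1 mulrC.
Qed.

End RowBlocks.

Section Vectorization.
Variable k : fieldType.

Definition colvec n m (X : 'M[k]_(n, m)) : 'cV[k]_(n * m) :=
  \matrix_(c, _) X (mxtens_unindex c).1 (mxtens_unindex c).2.

Lemma colvec_sum n m (I : finType) (F : I -> 'M[k]_(n, m)) :
  colvec (\sum_i F i) = \sum_i colvec (F i).
Proof. by apply/matrixP => c j; rewrite !mxE !summxE; apply: eq_bigr => i _; rewrite mxE. Qed.

Lemma colvecZ n m a (X : 'M[k]_(n, m)) : colvec (a *: X) = a *: colvec X.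
Proof. by apply/matrixP => c j; rewrite !mxE. Qed.

Lemma tensmx_mul_colvec n m p q (A : 'M[k]_(p, n)) (B : 'M[k]_(q, m)) (X : 'M[k]_(n, m)) :
  (A *t B) *m colvec X = colvec (A *m X *m B^T).
Proof.
apply/matrixP => c j; case: (mxtens_indexP c) => a b.
rewrite !mxE sum_mxtens_index mxtens_indexK /=.
under eq_bigr do under eq_bigr do rewrite tensmxE !mxE mxtens_indexK /=.
rewrite exchange_big; apply: eq_bigr => b' _; rewrite !mxE mulr_suml.
by apply: eq_bigr => a' _; rewrite ?mxE; ring.
Qed.

Lemma trmx_colvec_mul_tensmx n m p q (A : 'M[k]_(n, p)) (B : 'M[k]_(m, q)) (X : 'M[k]_(n, m)) :
  (colvec X)^T *m (A *t B) = (colvec (A^T *m X *m B))^T.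
Proof. by rewrite -[LHS]trmxK trmx_mul trmxK trmx_tens tensmx_mul_colvec trmxK. Qed.

(* [tens_col_id d v] is [v *t 1%:M] and [tens_id_row d w] is [1%:M *t w], without
   the casts from [1 * d] and [d * 1] to [d] that [*t] would need. *)
Definition tens_col_id n d (v : 'cV[k]_n) : 'M[k]_(n * d, d) :=
  \matrix_(c, j) (v (mxtens_unindex c).1 0 * ((mxtens_unindex c).2 == j)%:R).
Definition tens_id_row d n (w : 'rV[k]_n) : 'M[k]_(d, d * n) :=
  \matrix_(a, c) (((mxtens_unindex c).1 == a)%:R * w 0 (mxtens_unindex c).2).

Lemma tensmx_mul_tens_col_id n d (A : 'M[k]_n) (B : 'M[k]_d) (v : 'cV[k]_n) :
  (A *t B) *m tens_col_id d v = tens_col_id d (A *m v) *m B.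
Proof.
apply/matrixP => c m; case: (mxtens_indexP c) => a b.
rewrite [LHS]mxE sum_mxtens_index.
transitivity (\sum_a' (A a a' * v a' 0) * B b m).
  apply: eq_bigr => a' _.
  transitivity (\sum_b' (A a a' * v a' 0 * B b b') * (b' == m)%:R); last exact: sum_mul_delta.
  by apply: eq_bigr => b' _; rewrite tensmxE !mxE mxtens_indexK /=; ring.
rewrite [RHS]mxE.
transitivity (\sum_m' (b == m')%:R * ((A *m v) a 0 * B m' m)).
  by rewrite sum_delta_mul mxE mulr_suml.
by apply: eq_bigr => m' _; rewrite !mxE mxtens_indexK /=; ring.
Qed.

Lemma tens_col_idZ n d a (v : 'cV[k]_n) : tens_col_id d (a *: v) = a *: tens_col_id d v.
Proof. by apply/matrixP => c j; rewrite !mxE mulrA. Qed.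

Lemma tens_id_row_mul_tensmx d n (A : 'M[k]_d) (B : 'M[k]_n) (w : 'rV[k]_n) :
  tens_id_row d w *m (A *t B) = A *m tens_id_row d (w *m B).
Proof.
apply/matrixP => a c; case: (mxtens_indexP c) => a' b'.
rewrite [LHS]mxE sum_mxtens_index.
transitivity (A a a' * (w *m B) 0 b').
  transitivity (\sum_x (a == x)%:R * (A x a' * (w *m B) 0 b')); last exact: sum_delta_mul.
  apply: eq_bigr => x _; rewrite [(w *m B) 0 b']mxE !mulr_sumr; apply: eq_bigr => y _.
  by rewrite tensmxE !mxE mxtens_indexK /= (eq_sym x a); ring.
rewrite [RHS]mxE.
transitivity (\sum_x (a' == x)%:R * (A a x * (w *m B) 0 b')); first by rewrite sum_delta_mul.
by apply: eq_bigr => x _; rewrite [tens_id_row _ _ _ _]mxE mxtens_indexK /=; ring.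
Qed.

Lemma tens_id_rowZ d n a (w : 'rV[k]_n) : tens_id_row d (a *: w) = a *: tens_id_row d w.
Proof. by apply/matrixP => c j; rewrite !mxE mulrCA. Qed.

End Vectorization.

Section Convolution.
Variables (k : fieldType) (I : finType) (n : nat).
Variables (D : I -> I -> I -> k) (ep : I -> k).
Hypothesis coassD : forall p q' r' r,
  \sum_q D p q r * D q q' r' = \sum_s D p q' s * D s r' r.
Hypothesis counitDl : forall p r, \sum_q D p q r * ep q = (p == r)%:R.
Hypothesis counitDr : forall p q, \sum_r D p q r * ep r = (p == q)%:R.

Definition conv (F G : I -> 'M[k]_n) p := \sum_q \sum_r D p q r *: (F q *m G r).
Definition conv_one p : 'M[k]_n := ep p *: 1%:M.

Lemma eq_convl F F' G p : F =1 F' -> conv F G p = conv F' G p.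
Proof. by move=> eF; apply: eq_bigr => q _; rewrite eF. Qed.

Lemma eq_convr F G G' p : G =1 G' -> conv F G p = conv F G' p.
Proof. by move=> eG; apply: eq_bigr => q _; apply: eq_bigr => r _; rewrite eG. Qed.

Lemma conv1r F p : conv F conv_one p = F p.
Proof.
transitivity (\sum_q (\sum_r D p q r * ep r) *: F q); last first.
  by under eq_bigr do rewrite counitDr; apply: sum_delta_scale.
apply: eq_bigr => q _; rewrite scaler_suml; apply: eq_bigr => r _.
by rewrite /conv_one -scalemxAr mulmx1 scalerA.
Qed.

Lemma conv1l F p : conv conv_one F p = F p.
Proof.
transitivity (\sum_r (\sum_q D p q r * ep q) *: F r); last first.
  by under eq_bigr do rewrite counitDl; apply: sum_delta_scale.
rewrite /conv exchange_big; apply: eq_bigr => r _; rewrite scaler_suml.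
by apply: eq_bigr => q _; rewrite /conv_one -scalemxAl mul1mx scalerA.
Qed.

Lemma convA F G K p : conv (conv F G) K p = conv F (conv G K) p.
Proof.
transitivity (\sum_q \sum_r \sum_q' \sum_r' (D p q r * D q q' r') *: (F q' *m G r' *m K r)).
  apply: eq_bigr => q _; apply: eq_bigr => r _.
  rewrite mulmx_suml scaler_sumr; apply: eq_bigr => q' _.
  by rewrite mulmx_suml scaler_sumr; apply: eq_bigr => r' _; rewrite -scalemxAl scalerA.
transitivity (\sum_q' \sum_s \sum_r' \sum_r (D p q' s * D s r' r) *: (F q' *m G r' *m K r));
  last first.
  apply: eq_bigr => q' _; apply: eq_bigr => s _.
  rewrite mulmx_sumr scaler_sumr; apply: eq_bigr => r' _.
  by rewrite mulmx_sumr scaler_sumr; apply: eq_bigr => r _; rewrite -scalemxAr scalerA mulmxA.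
rewrite exchange_big_22; apply: eq_bigr => q' _.
rewrite [RHS]exchange_big_12; apply: eq_bigr => r' _.
rewrite exchange_big; apply: eq_bigr => r _.
by rewrite -!scaler_suml coassD.
Qed.

Lemma conv_inv_uniq L m R p :
  (forall q, conv L m q = conv_one q) -> (forall q, conv m R q = conv_one q) -> L p = R p.
Proof.
move=> Lm mR; rewrite -conv1r -(eq_convr _ _ mR) -convA (eq_convl _ _ Lm).
exact: conv1l.
Qed.

End Convolution.

Section Summands.
Variables (k : fieldType) (H : hopf_data k).
Implicit Types M N P Q : fdmod H.

Lemma is_hom_mul M N L (G : 'M[k]_(mdim L, mdim N)) (F : 'M[k]_(mdim N, mdim M)) :
  is_hom G -> is_hom F -> is_hom (G *m F).
Proof. by move=> hG hF i; rewrite -mulmxA hF !mulmxA hG. Qed.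

Lemma is_hom1 M : @is_hom k H M M 1%:M.
Proof. by move=> i; rewrite mul1mx mulmx1. Qed.

Lemma is_hom_tens M M' N N' (F : 'M[k]_(mdim N, mdim M)) (G : 'M[k]_(mdim N', mdim M')) :
  is_hom F -> is_hom G -> @is_hom k H (tens M M') (tens N N') (F *t G).
Proof.
move=> hF hG l /=; rewrite mulmx_sumr mulmx_suml; apply: eq_bigr => i _.
rewrite mulmx_sumr mulmx_suml; apply: eq_bigr => j _.
by rewrite -scalemxAr -scalemxAl !tensmx_mul hF hG.
Qed.

Lemma is_hom_inv M N (F : 'M[k]_(mdim N, mdim M)) (G : 'M[k]_(mdim M, mdim N)) :
  is_hom F -> F *m G = 1%:M -> G *m F = 1%:M -> is_hom G.
Proof.
move=> hF FG GF l.
by rewrite -[LHS]mulmx1 -FG !mulmxA -(mulmxA G) -hF mulmxA GF mul1mx.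
Qed.

Lemma mod_iso_sym M N : mod_iso M N -> mod_iso N M.
Proof. by case=> F [G [hF hG FG GF]]; exists G, F. Qed.

Definition summand P Q : Prop :=
  exists (I : 'M[k]_(mdim Q, mdim P)) (Pi : 'M[k]_(mdim P, mdim Q)),
    [/\ is_hom I, is_hom Pi & Pi *m I = 1%:M].

Lemma summand_trans P Q R : summand P Q -> summand Q R -> summand P R.
Proof.
move=> [I1 [P1 [hI1 hP1 e1]]] [I2 [P2 [hI2 hP2 e2]]].
exists (I2 *m I1), (P1 *m P2); split; try exact: is_hom_mul.
by rewrite mulmxA -(mulmxA P1) e2 mulmx1.
Qed.

Lemma mod_iso_summand M N : mod_iso M N -> summand M N.
Proof. by case=> F [G [hF hG _ GF]]; exists F, G. Qed.

Lemma summand_tensl Y P Q : summand P Q -> summand (tens Y P) (tens Y Q).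
Proof.
move=> [I [Pi [hI hPi e]]]; exists (1%:M *t I), (1%:M *t Pi).
by split; [exact: is_hom_tens (is_hom1 _) hI | exact: is_hom_tens (is_hom1 _) hPi |
  rewrite tensmx_mul mulmx1 e tensmx1].
Qed.

Lemma summand_tensr Y P Q : summand P Q -> summand (tens P Y) (tens Q Y).
Proof.
move=> [I [Pi [hI hPi e]]]; exists (I *t 1%:M), (Pi *t 1%:M).
by split; [exact: is_hom_tens hI (is_hom1 _) | exact: is_hom_tens hPi (is_hom1 _) |
  rewrite tensmx_mul mulmx1 e tensmx1].
Qed.

Definition dsum M N : fdmod H :=
  @FDMod k H (mdim M + mdim N) (fun l => block_mx (mact M l) 0 0 (mact N l)).

Lemma dsum_module M N : is_module M -> is_module N -> is_module (dsum M N).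
Proof.
have sum_block (I : finType) n1 n2 (c : I -> k) (A : I -> 'M[k]_n1) (B : I -> 'M[k]_n2) :
    \sum_i c i *: block_mx (A i) 0 0 (B i) = block_mx (\sum_i c i *: A i) 0 0 (\sum_i c i *: B i).
  apply: (big_rec3 (fun x y z => x = block_mx y 0 0 z)); first by rewrite block_mx0.
  by move=> i x y z _ ->; rewrite scale_block_mx add_block_mx !scaler0 !addr0.
move=> [mM uM] [mN uN]; split => [i j|] /=; last by rewrite sum_block uM uN -scalar_mx_block.
by rewrite mulmx_block !mulmx0 !mul0mx !addr0 !add0r mM mN sum_block.
Qed.

(* [F' = (I F, 1 - I Pi) : N (+) Q -> Q] is onto, so projectivity of [Q] splits it
   by some [G']; as [Pi F' = (F, 0)], the upper block of [G' I] splits [F]. *)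
Lemma projective_summand P Q : is_module Q -> summand P Q -> projective Q -> projective P.
Proof.
move=> modQ [I [Pi [hI hPi ePI]]] pQ N modN F hF rF.
have /row_freeP [s Fs] : row_free F by rewrite /row_free rF.
pose F' : 'M[k]_(mdim Q, mdim N + mdim Q) := row_mx (I *m F) (1%:M - I *m Pi).
have hF' : @is_hom k H (dsum N Q) Q F'.
  move=> l /=; rewrite mul_row_block !mulmx0 !addr0 !add0r mul_mx_row.
  congr row_mx; first by rewrite -mulmxA hF !mulmxA hI.
  by rewrite mulmxBl mulmxBr mul1mx mulmx1 -mulmxA hPi !mulmxA hI.
have rF' : \rank F' = mdim Q.
  apply/eqP/row_freeP; exists (col_mx (s *m Pi) 1%:M).
  by rewrite mul_row_col mulmx1 -mulmxA (mulmxA F) Fs mul1mx addrC subrK.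
have [G' [hG' FG']] := pQ _ (dsum_module modN modQ) F' hF' rF'.
have PiF' : Pi *m F' = row_mx F 0.
  by rewrite mul_mx_row mulmxA ePI mul1mx mulmxBr mulmx1 mulmxA ePI mul1mx subrr.
exists (usubmx (G' *m I)); split.
  move=> l; have e : G' *m I *m mact P l = mact (dsum N Q) l *m (G' *m I).
    by rewrite -mulmxA hI !mulmxA hG'.
  rewrite /= -[G' *m I]vsubmxK mul_col_mx mul_block_col !mul0mx !addr0 add0r in e.
  by case/eq_col_mx: e.
have e : Pi *m F' *m (G' *m I) = 1%:M by rewrite mulmxA -(mulmxA Pi) FG' mulmx1.
by rewrite PiF' -[G' *m I]vsubmxK mul_row_col mul0mx addr0 in e.
Qed.

End Summands.

Section HopfAxioms.
Variables (k : fieldType) (H : hopf_data k) (HH : is_hopf H).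
Local Notation mu := (hmu H).
Local Notation u := (hunit H).
Local Notation del := (hdelta H).
Local Notation eps := (heps H).
Local Notation S := (hS H).

Lemma hopf_mulA i j p q : \sum_l mu i j l * mu l p q = \sum_l mu j p l * mu i l q.
Proof. by case: HH => X _; apply: X. Qed.
Lemma hopf_mul1l j q : \sum_l u l * mu l j q = (j == q)%:R.
Proof. by case: HH => _ [X _]; apply: X. Qed.
Lemma hopf_mul1r j q : \sum_l u l * mu j l q = (j == q)%:R.
Proof. by case: HH => _ [_ [X _]]; apply: X. Qed.
Lemma hopf_coassoc l x y z : \sum_i del l i z * del i x y = \sum_j del l x j * del j y z.
Proof. by case: HH => _ [_ [_ [X _]]]; apply: X. Qed.
Lemma hopf_counitl l j : \sum_i del l i j * eps i = (l == j)%:R.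
Proof. by case: HH => _ [_ [_ [_ [X _]]]]; apply: X. Qed.
Lemma hopf_counitr l i : \sum_j del l i j * eps j = (l == i)%:R.
Proof. by case: HH => _ [_ [_ [_ [_ [X _]]]]]; apply: X. Qed.
Lemma hopf_deltaM i j x y : \sum_l mu i j l * del l x y =
  \sum_a \sum_b \sum_c \sum_d del i a b * del j c d * mu a c x * mu b d y.
Proof. by case: HH => _ [_ [_ [_ [_ [_ [X _]]]]]]; apply: X. Qed.
Lemma hopf_delta1 x y : \sum_l u l * del l x y = u x * u y.
Proof. by case: HH => _ [_ [_ [_ [_ [_ [_ [X _]]]]]]]; apply: X. Qed.
Lemma hopf_epsM i j : \sum_l mu i j l * eps l = eps i * eps j.
Proof. by case: HH => _ [_ [_ [_ [_ [_ [_ [_ [X _]]]]]]]]; apply: X. Qed.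
Lemma hopf_eps1 : \sum_l u l * eps l = 1.
Proof. by case: HH => _ [_ [_ [_ [_ [_ [_ [_ [_ [X _]]]]]]]]]. Qed.
Lemma hopf_antipodel l x : \sum_a \sum_b \sum_c del l a b * S a c * mu c b x = eps l * u x.
Proof. by case: HH => _ [_ [_ [_ [_ [_ [_ [_ [_ [_ [X _]]]]]]]]]]; apply: X. Qed.
Lemma hopf_antipoder l x : \sum_a \sum_b \sum_c del l a b * S b c * mu a c x = eps l * u x.
Proof. by case: HH => _ [_ [_ [_ [_ [_ [_ [_ [_ [_ [_ X]]]]]]]]]]; apply: X. Qed.

End HopfAxioms.

Section TensorModules.
Variables (k : fieldType) (H : hopf_data k) (HH : is_hopf H).
Local Notation mu := (hmu H).
Local Notation del := (hdelta H).

Lemma tens_module (M N : fdmod H) : is_module M -> is_module N -> is_module (tens M N).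
Proof.
move=> [mM uM] [mN uN]; split => [i j|] /=.
  transitivity (\sum_x \sum_y (\sum_l mu i j l * del l x y) *: (mact M x *t mact N y));
    last first.
    under [RHS]eq_bigr do rewrite scaler_sumrZ2.
    by rewrite exchange_big_12; apply: eq_bigr => x _; apply: eq_bigr => y _; rewrite scaler_suml.
  rewrite mulmx_sum2Z.
  under eq_bigr do under eq_bigr do under eq_bigr do under eq_bigr do
    rewrite tensmx_mul mM mN tensmx_sumZ scaler_sumrZ2.
  rewrite exchange_big_42; apply: eq_bigr => x _; apply: eq_bigr => y _.
  rewrite hopf_deltaM // scaler_suml4.
  by do 4!(apply: eq_bigr => ? _); rewrite !mulrA.
rewrite -tensmx1 -uM -uN tensmx_sumZ.
under eq_bigr do rewrite scaler_sumrZ2.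
rewrite exchange_big_12; apply: eq_bigr => x _; apply: eq_bigr => y _.
by rewrite -scaler_suml hopf_delta1.
Qed.

Lemma tpow_module (M : fdmod H) n : is_module M -> (0 < n)%N -> is_module (tpow M n).
Proof.
move=> HM; elim: n => [//|[_ _ //|n] IH _].
exact: (tens_module (IH isT) HM).
Qed.

Lemma mact_tensA (M N L : fdmod H) l :
  mact (tens (tens M N) L) l =
  castmx (mulnA _ _ _, mulnA _ _ _) (mact (tens M (tens N L)) l).
Proof.
transitivity (\sum_x \sum_y \sum_z (\sum_i del l i z * del i x y) *:
   ((mact M x *t mact N y) *t mact L z)).
  rewrite /=; under eq_bigr do under eq_bigr do rewrite tensmx_suml scaler_sumr.
  under eq_bigr do under eq_bigr do under eq_bigr do rewrite tensmx_suml scaler_sumr.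
  rewrite exchange_big_22; apply: eq_bigr => x _; apply: eq_bigr => y _.
  rewrite exchange_big; apply: eq_bigr => z _; rewrite scaler_suml.
  by apply: eq_bigr => i _; rewrite tensmxZl scalerA.
rewrite /= castmx_sum; apply: eq_bigr => x _.
rewrite castmx_sum; under [RHS]eq_bigr do rewrite castmxZ tensmx_sumr castmx_sum scaler_sumr.
under [RHS]eq_bigr do under eq_bigr do rewrite tensmx_sumr castmx_sum scaler_sumr.
under [RHS]eq_bigr do under eq_bigr do under eq_bigr do
  rewrite tensmxZr castmxZ scalerA -tensmxA.
rewrite [RHS]exchange_big_12; apply: eq_bigr => y _; apply: eq_bigr => z _.
by rewrite -scaler_suml hopf_coassoc.
Qed.

Lemma tensA_hom (M N L : fdmod H) :
  @is_hom k H (tens (tens M N) L) (tens M (tens N L))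
    (cast_idmx (esym (mulnA (mdim M) (mdim N) (mdim L)))).
Proof. by move=> l; rewrite mact_tensA cast_idmx_conj castmxK. Qed.

Lemma mod_iso_tensA (M N L : fdmod H) : mod_iso (tens (tens M N) L) (tens M (tens N L)).
Proof.
exists (cast_idmx (esym (mulnA (mdim M) (mdim N) (mdim L)))), (cast_idmx (mulnA _ _ _)).
split; [exact: tensA_hom | | exact: cast_idmxK | exact: cast_idmxKV].
by move=> l; rewrite cast_idmx_conj -mact_tensA.
Qed.

End TensorModules.

Section TensorSquareCoalgebra.
Variables (k : fieldType) (H : hopf_data k) (HH : is_hopf H).
Local Notation h := (hdim H).
Local Notation del := (hdelta H).
Local Notation eps := (heps H).

Definition delta2 (p q s : 'I_h * 'I_h) := del p.1 q.1 s.1 * del p.2 q.2 s.2.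
Definition eps2 (p : 'I_h * 'I_h) := eps p.1 * eps p.2.

Lemma delta2_coassoc p q' r' s :
  \sum_q delta2 p q s * delta2 q q' r' = \sum_t delta2 p q' t * delta2 t r' s.
Proof.
rewrite !sum_pair; under eq_bigr do under eq_bigr do rewrite /delta2 /= mulrACA.
rewrite -big_distrlr /= !hopf_coassoc // big_distrlr; apply: eq_bigr => a _.
by apply: eq_bigr => c _; rewrite /delta2 /= mulrACA.
Qed.

Lemma delta2_counitl p s : \sum_q delta2 p q s * eps2 q = (p == s)%:R.
Proof.
rewrite sum_pair; under eq_bigr do under eq_bigr do rewrite /delta2 /eps2 /= mulrACA.
rewrite -big_distrlr /= !hopf_counitl // -natrM -mulnb.
by case: p s => [? ?] [? ?].
Qed.

Lemma delta2_counitr p q : \sum_s delta2 p q s * eps2 s = (p == q)%:R.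
Proof.
rewrite sum_pair; under eq_bigr do under eq_bigr do rewrite /delta2 /eps2 /= mulrACA.
rewrite -big_distrlr /= !hopf_counitr // -natrM -mulnb.
by case: p q => [? ?] [? ?].
Qed.

End TensorSquareCoalgebra.
Arguments delta2 {k} H p q s.
Arguments eps2 {k} H p.

Section Antipode.
Variables (k : fieldType) (H : hopf_data k) (HH : is_hopf H).
Local Notation h := (hdim H).
Local Notation mu := (hmu H).
Local Notation u := (hunit H).
Local Notation del := (hdelta H).
Local Notation eps := (heps H).
Local Notation S := (hS H).

Definition mactS (M : fdmod H) l := \sum_j S l j *: mact M j.

Variable M : fdmod H.
Hypothesis HM : is_module M.
Local Notation r := (mact M).

Lemma mactM i j : r i *m r j = \sum_l mu i j l *: r l.
Proof. by case: HM => X _; apply: X. Qed.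

Lemma mact1 : \sum_l u l *: r l = 1%:M.
Proof. by case: HM. Qed.

Lemma mactS_antipodel z : \sum_a \sum_b del z a b *: (mactS M a *m r b) = eps z *: 1%:M.
Proof.
transitivity (\sum_a \sum_b \sum_c \sum_y (del z a b * S a c * mu c b y) *: r y).
  apply: eq_bigr => a _; apply: eq_bigr => b _.
  rewrite /mactS mulmx_suml scaler_sumr; apply: eq_bigr => c _.
  by rewrite -scalemxAl mactM !scaler_sumrZ; under eq_bigr do rewrite !mulrA.
rewrite exchange_big_31 -mact1 scaler_sumr; apply: eq_bigr => y _.
by rewrite scalerA -hopf_antipodel // scaler_suml3.
Qed.

Lemma mactS_antipoder z : \sum_a \sum_b del z a b *: (r a *m mactS M b) = eps z *: 1%:M.
Proof.
transitivity (\sum_a \sum_b \sum_c \sum_y (del z a b * S b c * mu a c y) *: r y).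
  apply: eq_bigr => a _; apply: eq_bigr => b _.
  rewrite /mactS mulmx_sumr scaler_sumr; apply: eq_bigr => c _.
  by rewrite -scalemxAr mactM !scaler_sumrZ; under eq_bigr do rewrite !mulrA.
rewrite exchange_big_31 -mact1 scaler_sumr; apply: eq_bigr => y _.
by rewrite scalerA -hopf_antipoder // scaler_suml3.
Qed.

Lemma mactS1 : \sum_l u l *: mactS M l = 1%:M.
Proof.
have u_eps : \sum_l u l *: (eps l *: 1%:M) = 1%:M :> 'M[k]_(mdim M).
  by under eq_bigr do rewrite scalerA; rewrite -scaler_suml hopf_eps1 // scale1r.
transitivity ((\sum_a u a *: mactS M a) *m (\sum_b u b *: r b)); first by rewrite mact1 mulmx1.
rewrite mulmx_sumZ -u_eps.
under [RHS]eq_bigr do rewrite -mactS_antipodel scaler_sumrZ2.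
rewrite exchange_big_12; apply: eq_bigr => a _; apply: eq_bigr => b _.
by rewrite -scaler_suml hopf_delta1.
Qed.

Definition mactS_of_mul (p : 'I_h * 'I_h) := \sum_l mu p.1 p.2 l *: mactS M l.
Definition mact_mul (p : 'I_h * 'I_h) := r p.1 *m r p.2.
Definition mactS_mul_rev (p : 'I_h * 'I_h) := mactS M p.2 *m mactS M p.1.

Lemma conv_mactS_of_mul p :
  conv (delta2 H) mactS_of_mul mact_mul p = conv_one (mdim M) (eps2 H) p.
Proof.
case: p => i j; rewrite /conv /conv_one /eps2 /=.
transitivity (\sum_a \sum_b \sum_c \sum_e \sum_l \sum_l'
   (del i a b * del j c e * (mu a c l * mu b e l')) *: (mactS M l *m r l')).
  rewrite sum_pair; apply: eq_bigr => a _.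
  rewrite exchange_big sum_pair; apply: eq_bigr => b _.
  rewrite exchange_big; apply: eq_bigr => c _; apply: eq_bigr => e _.
  by rewrite /mactS_of_mul /mact_mul /delta2 /= mactM mulmx_sumZ scaler_sumrZ2.
rewrite exchange_big_42.
transitivity (\sum_l \sum_l' (\sum_z mu i j z * del z l l') *: (mactS M l *m r l')).
  apply: eq_bigr => l _; apply: eq_bigr => l' _.
  rewrite hopf_deltaM // scaler_suml4.
  by do 4!(apply: eq_bigr => ? _); rewrite !mulrA.
under eq_bigr do under eq_bigr do rewrite scaler_suml.
rewrite -exchange_big_12 -hopf_epsM // scaler_suml; apply: eq_bigr => z _.
by rewrite -scalerA -mactS_antipodel scaler_sumrZ2.
Qed.

Lemma conv_mact_mul p :
  conv (delta2 H) mact_mul mactS_mul_rev p = conv_one (mdim M) (eps2 H) p.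
Proof.
case: p => i j; rewrite /conv /conv_one /eps2 /=.
transitivity (\sum_a \sum_b \sum_c \sum_e
    (del i a b * del j c e) *: (r a *m (r c *m mactS M e) *m mactS M b)).
  rewrite sum_pair; apply: eq_bigr => a _.
  rewrite exchange_big sum_pair; apply: eq_bigr => b _.
  rewrite exchange_big; apply: eq_bigr => c _; apply: eq_bigr => e _.
  by rewrite /mact_mul /mactS_mul_rev /delta2 !mulmxA.
transitivity (\sum_a \sum_b del i a b *: (r a *m (eps j *: 1%:M) *m mactS M b)).
  apply: eq_bigr => a _; apply: eq_bigr => b _.
  rewrite -mactS_antipoder (mulmx_sumr (r a)) mulmx_suml scaler_sumr; apply: eq_bigr => c _.
  rewrite (mulmx_sumr (r a)) mulmx_suml scaler_sumr; apply: eq_bigr => e _.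
  by rewrite -scalemxAr -scalemxAl scalerA.
under eq_bigr do under eq_bigr do rewrite -scalemxAr mulmx1 -scalemxAl scalerA mulrC.
by rewrite -scaler_sumrZ2 mactS_antipoder scalerA mulrC.
Qed.

(* [mactS_of_mul] and [mactS_mul_rev] are a left and a right inverse of [mact_mul]
   in the convolution algebra of the coalgebra [A (x) A], hence equal. *)
Lemma mactSM i j : \sum_l mu i j l *: mactS M l = mactS M j *m mactS M i.
Proof.
exact: (conv_inv_uniq (delta2_coassoc HH) (delta2_counitl HH) (delta2_counitr HH)
  (i, j) conv_mactS_of_mul conv_mact_mul).
Qed.

Lemma dual_module : is_module (dual M).
Proof.
split=> [i j|] /=; last first.
  by rewrite -trmx1 -mactS1 linear_sum; apply: eq_bigr => l _; rewrite linearZ.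
by rewrite -trmx_mul -mactSM linear_sum; apply: eq_bigr => l _; rewrite linearZ.
Qed.

End Antipode.

Section FreeModules.
Variables (k : fieldType) (H : hopf_data k) (HH : is_hopf H).
Local Notation h := (hdim H).
Local Notation mu := (hmu H).
Local Notation u := (hunit H).
Local Notation eps := (heps H).

Definition regular_mx l : 'M[k]_h := \matrix_(a, b) mu l b a.
Definition regular : fdmod H := FDMod regular_mx.
Definition trivn d : fdmod H := @FDMod k H d (fun l => (eps l)%:M).
Definition free_mod d := tens regular (trivn d).

Lemma regular_module : is_module regular.
Proof.
split=> [i j|]; apply/matrixP => a b; rewrite !mxE summxE.
  under eq_bigr do rewrite !mxE; under [RHS]eq_bigr do rewrite !mxE.
  by rewrite hopf_mulA //; apply: eq_bigr => l _; rewrite mulrC.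
by under eq_bigr do rewrite !mxE; rewrite hopf_mul1l // eq_sym.
Qed.

Lemma trivn_module d : is_module (trivn d).
Proof.
split=> [i j|] /=.
  by rewrite -scalar_mxM -hopf_epsM // raddf_sum; under eq_bigr do rewrite scale_scalar_mx.
rewrite -(hopf_eps1 HH) raddf_sum.
by under eq_bigr do rewrite scale_scalar_mx.
Qed.

Lemma free_mod_module d : is_module (free_mod d).
Proof. exact: (tens_module HH regular_module (trivn_module d)). Qed.

Lemma mact_free_mod d l : mact (free_mod d) l = regular_mx l *t 1%:M.
Proof.
transitivity (\sum_i (\sum_j hdelta H l i j * eps j) *: (regular_mx i *t (1%:M : 'M[k]_d))).
  rewrite /=; apply: eq_bigr => i _; rewrite scaler_suml; apply: eq_bigr => j _.
  by rewrite -[(eps j)%:M]scalemx1 tensmxZr scalerA.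
by under eq_bigr do rewrite hopf_counitr //; apply: sum_delta_scale.
Qed.

Definition free_gen d : 'M[k]_(h * d, d) :=
  \matrix_(c, j) (u (mxtens_unindex c).1 * ((mxtens_unindex c).2 == j)%:R).

Lemma row_blocks_mul_free_gen m d (C : 'I_h -> 'M[k]_(m, d)) :
  row_blocks C *m free_gen d = \sum_i u i *: C i.
Proof.
apply/matrixP => r j; rewrite !mxE sum_mxtens_index summxE; apply: eq_bigr => i _.
rewrite mxE; under eq_bigr do rewrite !mxE mxtens_indexK /= mulrCA.
by rewrite -mulr_sumr sum_mul_delta.
Qed.

Lemma row_blocks_regular_free_gen d :
  row_blocks (fun i => (regular_mx i *t 1%:M) *m free_gen d) = 1%:M.
Proof.
rewrite -tensmx1; apply/matrixP => a c.
case: (mxtens_indexP a) => a1 a2; case: (mxtens_indexP c) => i j.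
rewrite tensmxE !mxE mxtens_indexK /= sum_mxtens_index.
transitivity (\sum_i' (u i' * mu i i' a1) * (a2 == j)%:R).
  apply: eq_bigr => i' _.
  under eq_bigr do rewrite tensmxE !mxE mxtens_indexK /= !mulrA.
  by rewrite sum_mul_delta mulrAC (mulrC (mu i i' a1)).
by rewrite -mulr_suml hopf_mul1r // eq_sym.
Qed.

Lemma projective_summand_free_mod P : is_module P -> projective P -> summand P (free_mod (mdim P)).
Proof.
move=> HP pP; pose Phi := row_blocks (mact P) : 'M[k]_(mdim P, mdim (free_mod (mdim P))).
have hPhi : @is_hom k H (free_mod (mdim P)) P Phi.
  move=> l; rewrite mact_free_mod row_blocks_mul_tens mul_row_blocks; apply: eq_row_blocks => i.
  by rewrite mactM //; apply: eq_bigr => i' _; rewrite !mxE.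
have rPhi : \rank Phi = mdim P.
  by apply/eqP/row_freeP; exists (free_gen (mdim P)); rewrite row_blocks_mul_free_gen mact1.
have [G [hG PhiG]] := pP _ (free_mod_module (mdim P)) Phi hPhi rPhi.
by exists G, Phi.
Qed.

Lemma free_mod_projective d : projective (free_mod d).
Proof.
move=> N HN F hF rF.
have /row_freeP [s Fs] : row_free F by rewrite /row_free rF.
pose T := s *m free_gen d.
exists (row_blocks (fun i => mact N i *m T)); split.
  move=> l; rewrite mact_free_mod row_blocks_mul_tens mul_row_blocks; apply: eq_row_blocks => i.
  rewrite mulmxA mactM // mulmx_suml; apply: eq_bigr => i' _.
  by rewrite mxE scalemxAl.
rewrite mul_row_blocks -row_blocks_regular_free_gen; apply: eq_row_blocks => i.
by rewrite /T !mulmxA hF mact_free_mod -!mulmxA (mulmxA F) Fs mul1mx.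
Qed.

End FreeModules.
Arguments regular_mx {k H} l.
Arguments regular {k H}.
Arguments trivn {k H} d.
Arguments free_mod {k H} d.
Arguments free_gen {k H} d.
Arguments free_mod_projective {k H} HH d.

Section Untwisting.
Variables (k : fieldType) (H : hopf_data k) (HH : is_hopf H).
Local Notation h := (hdim H).
Local Notation mu := (hmu H).
Local Notation del := (hdelta H).
Variable Z : fdmod H.
Hypothesis HZ : is_module Z.
Local Notation z := (mact Z).

(* In terms of elements, [twist] is [a (x) v |-> a_(1) (x) a_(2) v] from [free_mod (mdim Z)]
   to [regular (x) Z], and [untwist] is [a (x) v |-> a_(1) (x) S(a_(2)) v]. *)
Definition twist : 'M[k]_(h * mdim Z) := blocks (fun i l => \sum_w del l i w *: z w).
Definition untwist : 'M[k]_(h * mdim Z) := blocks (fun i l => \sum_w del l i w *: mactS Z w).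

Lemma twistK : twist *m untwist = 1%:M.
Proof.
rewrite mul_blocks -blocks1; apply: eq_blocks => i l'.
transitivity (\sum_l \sum_j \sum_j' (del l i j * del l' l j') *: (z j *m mactS Z j')).
  by apply: eq_bigr => l _; rewrite mulmx_sumZ.
transitivity (\sum_m del l' i m *: (heps H m *: (1%:M : 'M[k]_(mdim Z)))); last first.
  by under eq_bigr do rewrite scalerA; rewrite -scaler_suml hopf_counitr // eq_sym.
rewrite exchange_big_12; under [RHS]eq_bigr do rewrite -(mactS_antipoder HH HZ) scaler_sumrZ2.
rewrite [RHS]exchange_big_12; apply: eq_bigr => j _; apply: eq_bigr => j' _.
rewrite -!scaler_suml -hopf_coassoc //.
by congr (_ *: _); apply: eq_bigr => m _; rewrite mulrC.
Qed.

Lemma twist_hom : @is_hom k H (free_mod (mdim Z)) (tens regular Z) twist.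
Proof.
move=> b; rewrite (mact_free_mod HH) tensmx_blocks /twist mul_blocks.
have -> : mact (tens regular Z) b =
    blocks (fun c l => \sum_x \sum_y (del b x y * mu x l c) *: z y).
  rewrite /= -sum_blocks; apply: eq_bigr => x _; rewrite -sum_blocks; apply: eq_bigr => y _.
  by rewrite tensmx_blocks scale_blocks; apply: eq_blocks => c l; rewrite mxE scalerA.
rewrite mul_blocks; apply: eq_blocks => i a.
transitivity (\sum_w (\sum_l mu b a l * del l i w) *: z w).
  under eq_bigr do rewrite mxE -scalemxAr mulmx1 scaler_sumrZ.
  by rewrite exchange_big; under eq_bigr do rewrite -scaler_suml.
transitivity (\sum_l \sum_x \sum_y \sum_d \sum_w
    (del b x y * mu x l i * del a l d * mu y d w) *: z w); last first.
  apply: eq_bigr => l _; rewrite mulmx_suml; apply: eq_bigr => x _.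
  rewrite mulmx_suml; apply: eq_bigr => y _.
  rewrite -scalemxAl mulmx_sumr scaler_sumr; apply: eq_bigr => d _.
  by rewrite -scalemxAr scalerA mactM // scaler_sumrZ.
rewrite exchange_big_41; apply: eq_bigr => w _.
rewrite hopf_deltaM // scaler_suml4 [RHS]exchange_big_12.
do 4!(apply: eq_bigr => ? _); congr (_ *: _); ring.
Qed.

Lemma mod_iso_free_mod_tens : mod_iso (free_mod (mdim Z)) (tens regular Z).
Proof.
have untwistK : untwist *m twist = 1%:M by apply: mulmx1C; apply: twistK.
exists twist, untwist; split=> //; first exact: twist_hom; last exact: twistK.
exact: (is_hom_inv twist_hom twistK untwistK).
Qed.

End Untwisting.

Lemma projective_tens (k : fieldType) (H : hopf_data k) (HH : is_hopf H) (P X : fdmod H) :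
  is_module P -> is_module X -> projective P -> projective (tens P X).
Proof.
move=> HP HX pP; set d := mdim P.
have PF : summand (tens P X) (tens (free_mod d) X).
  exact: summand_tensr (projective_summand_free_mod HH HP pP).
have FA : summand (tens (free_mod d) X) (tens regular (tens (trivn d) X)).
  exact: mod_iso_summand (mod_iso_tensA HH _ _ _).
have AF : summand (tens regular (tens (trivn d) X)) (free_mod (mdim (tens (trivn d) X))).
  apply/mod_iso_summand/mod_iso_sym.
  exact: (mod_iso_free_mod_tens HH (tens_module HH (trivn_module HH d) HX)).
exact: (projective_summand (free_mod_module HH _) (summand_trans PF (summand_trans FA AF))
  (free_mod_projective HH _)).
Qed.

Section Snake.
Variables (k : fieldType) (H : hopf_data k) (HH : is_hopf H).
Local Notation eps := (heps H).
Variable M : fdmod H.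
Hypothesis HM : is_module M.
Local Notation d := (mdim M).
Local Notation r := (mact M).
Local Notation dl x y := ((x == y)%:R : k).

(* The identity of [M], as a vector of [M (x) M^*] (coevaluation) and as a
   covector on [M^* (x) M] (evaluation). *)
Definition coev : 'cV[k]_(d * d) := colvec 1%:M.

Lemma coev_invariant i : mact (tens M (dual M)) i *m coev = eps i *: coev.
Proof.
transitivity (\sum_x \sum_y hdelta H i x y *: colvec (r x *m mactS M y)).
  rewrite /= mulmx_suml; apply: eq_bigr => x _; rewrite mulmx_suml; apply: eq_bigr => y _.
  by rewrite -scalemxAl tensmx_mul_colvec trmxK mulmx1.
rewrite /coev -colvecZ -(mactS_antipoder HH HM) colvec_sum; apply: eq_bigr => x _.
by rewrite colvec_sum; apply: eq_bigr => y _; rewrite colvecZ.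
Qed.

Lemma ev_invariant j : coev^T *m mact (tens (dual M) M) j = eps j *: coev^T.
Proof.
transitivity (\sum_y \sum_z hdelta H j y z *: (colvec (mactS M y *m r z))^T).
  rewrite /= mulmx_sumr; apply: eq_bigr => y _; rewrite mulmx_sumr; apply: eq_bigr => z _.
  by rewrite -scalemxAr trmx_colvec_mul_tensmx trmxK mulmx1.
have -> : eps j *: coev^T = (eps j *: coev)^T by rewrite linearZ.
rewrite /coev -colvecZ -(mactS_antipodel HH HM) colvec_sum linear_sum.
apply: eq_bigr => y _; rewrite colvec_sum linear_sum; apply: eq_bigr => z _.
by rewrite colvecZ linearZ.
Qed.

Definition coev_tens : 'M[k]_(d * d * d, d) := tens_col_id d coev.
Definition tens_ev : 'M[k]_(d, d * (d * d)) := tens_id_row d coev^T.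

Lemma coev_tens_hom : @is_hom k H M (tens (tens M (dual M)) M) coev_tens.
Proof.
move=> l; symmetry.
transitivity (\sum_i \sum_z (hdelta H l i z * eps i) *: (coev_tens *m r z)).
  rewrite [mact _ l]/= mulmx_suml; apply: eq_bigr => i _.
  rewrite mulmx_suml; apply: eq_bigr => z _.
  by rewrite -scalemxAl tensmx_mul_tens_col_id coev_invariant tens_col_idZ -scalemxAl scalerA.
rewrite exchange_big; under eq_bigr do rewrite -scaler_suml hopf_counitl //.
exact: sum_delta_scale.
Qed.

Lemma tens_ev_hom : @is_hom k H (tens M (tens (dual M) M)) M tens_ev.
Proof.
move=> l.
transitivity (\sum_x \sum_j (hdelta H l x j * eps j) *: (r x *m tens_ev)).
  rewrite [mact _ l]/= mulmx_sumr; apply: eq_bigr => x _.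
  rewrite mulmx_sumr; apply: eq_bigr => j _.
  by rewrite -scalemxAr tens_id_row_mul_tensmx ev_invariant tens_id_rowZ -scalemxAr scalerA.
under eq_bigr do rewrite -scaler_suml hopf_counitr //.
exact: sum_delta_scale.
Qed.

Lemma snake_identity :
  tens_ev *m cast_idmx (esym (mulnA d d d)) *m coev_tens = 1%:M.
Proof.
rewrite mulmx_cast_idmx; apply/matrixP => a m.
rewrite [LHS]mxE sum_mxtens_index sum_mxtens_index.
transitivity (\sum_a1 \sum_f \sum_b ((dl a1 a) * (dl f b)) * ((dl a1 f) * (dl b m))).
  apply: eq_bigr => a1 _; apply: eq_bigr => f _; apply: eq_bigr => b _.
  by rewrite castmxE /= cast_mxtens_indexA !mxE !mxtens_indexK /= cast_ord_id.
transitivity (\sum_a1 (dl a1 a) * (dl a1 m)).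
  apply: eq_bigr => a1 _.
  transitivity (\sum_f ((dl a1 a) * (dl a1 f)) * (dl f m)); last by rewrite sum_mul_delta; ring.
  apply: eq_bigr => f _.
  transitivity (\sum_b ((dl a1 a) * (dl f b) * (dl a1 f)) * (dl b m)).
    by apply: eq_bigr => b _; ring.
  by rewrite sum_mul_delta; ring.
under eq_bigr do rewrite eq_sym.
by rewrite sum_delta_mul mxE.
Qed.

Lemma summand_snake : summand M (tens (tens M (dual M)) M).
Proof.
exists coev_tens, (tens_ev *m cast_idmx (esym (mulnA d d d))); split.
- exact: coev_tens_hom.
- exact: is_hom_mul tens_ev_hom (tensA_hom HH _ _ _).
- exact: snake_identity.
Qed.

End Snake.

Section TensorPowers.
Variables (k : fieldType) (H : hopf_data k) (HH : is_hopf H).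
Variable M : fdmod H.
Hypothesis HM : is_module M.

Lemma projective_tpow n : projective M -> projective (tpow M n.+1).
Proof.
move=> pM; elim: n => [//|n IH].
exact: (projective_tens HH (tpow_module HH HM (ltn0Sn n)) HM IH).
Qed.

Hypothesis Hc : mod_iso (tens M (dual M)) (tens (dual M) M).

Lemma summand_tens_tens_dual : summand M (tens (tens M M) (dual M)).
Proof.
apply: summand_trans (summand_snake HH HM) _.
apply: summand_trans (mod_iso_summand (mod_iso_tensA HH _ _ _)) _.
apply: summand_trans (summand_tensl M (mod_iso_summand (mod_iso_sym Hc))) _.
exact: mod_iso_summand (mod_iso_sym (mod_iso_tensA HH _ _ _)).
Qed.

Lemma summand_tpow_tens_dual n :
  summand (tpow M n.+1) (tens (tpow M n.+2) (dual M)).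
Proof.
case: n => [|n]; first exact: summand_tens_tens_dual.
apply: summand_trans (summand_tensl (tpow M n.+1) summand_tens_tens_dual) _.
apply: summand_trans (mod_iso_summand (mod_iso_sym (mod_iso_tensA HH _ _ _))) _.
exact: summand_tensr (mod_iso_summand (mod_iso_sym (mod_iso_tensA HH _ _ _))).
Qed.

Lemma projective_tpow_pred n : projective (tpow M n.+2) -> projective (tpow M n.+1).
Proof.
move=> pT; have HD := dual_module HH HM.
have HT := tpow_module HH HM (ltn0Sn n.+1).
exact: (projective_summand (tens_module HH HT HD) (summand_tpow_tens_dual n)
  (projective_tens HH HT HD pT)).
Qed.

End TensorPowers.

Theorem theorem5p1 (k : fieldType) (H : hopf_data k) (HH : is_hopf H)
  (n : nat) (hn : (0 < n)%N) (M : fdmod H) (HM : is_module M)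
  (Hc : mod_iso (tens M (dual M)) (tens (dual M) M)) :
  projective M <-> projective (tpow M n).
Proof.
case: n hn => [//|n] _; split; first exact: projective_tpow.
elim: n => [//|n IH] pT.
exact/IH/(projective_tpow_pred HH HM Hc).
Qed.
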